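(* For $m=1,2,3,\ldots$ define $$P_m=\prod_{n=1}^{\infty}\left(\prod_{k=0}^{n}(k+1)^{(-1)^{k+1}\binom{n}{k}}\right)^{\left(\frac{m}{m+1}\right)^n}.$$ Then the product converges, and $$\gamma(-m)=\frac{1}{m}\log\frac{m+1}{P_m}.$$
   Context: $\gamma(z)$ is the generalized-Euler-constant function: for $|z|\le1$, $\gamma(z)=\sum_{n=1}^{\infty} z^{n-1}\left(\frac{1}{n}-\log\frac{n+1}{n}\right)$, and for $z\in\mathbb{C}\setminus[1,\infty)$ (in particular for negative real $z$) it denotes the analytic continuation $\gamma(z)=\int_0^1\frac{1-x+\log x}{(1-xz)\log x}\,dx$. *)

From Stdlib Require Import Reals.
From Coquelicot Require Import Coquelicot.
Open Scope R_scope.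

Fixpoint prod_upto (f : nat -> R) (N : nat) : R :=
  match N with
  | O => 1
  | S N' => prod_upto f N' * f N'
  end.

(* Analytic continuation of the generalized Euler constant function:
   gamma(z) = int_0^1 (1 - x + log x) / ((1 - x z) log x) dx. *)
Definition gamma_fun (z : R) : R :=
  RInt (fun x => (1 - x + ln x) / ((1 - x * z) * ln x)) 0 1.

Definition inner_factor (n : nat) : R :=
  prod_upto (fun k => Rpower (INR k + 1) ((-1) ^ (k + 1) * Binomial.C n k)) (S n).

Definition P_partial (m : nat) (N : nat) : R :=
  prod_upto (fun i => Rpower (inner_factor (S i)) ((INR m / (INR m + 1)) ^ (S i))) N.

From Stdlib Require Import Reals Lra Lia.
From Coquelicot Require Import Coquelicot.
Open Scope R_scope.

(* With F t := int_0^1 (x^t - 1) / ln x dx, differentiating under the integral sign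
   gives F' t = int_0^1 x^t dx = 1 / (t + 1), and 0 <= F t <= t, so F t = ln (1 + t).
   By the binomial theorem the logarithm of the n-th inner factor is
   sum_k (-1)^(k+1) C(n,k) F k = int_0^1 (1 - x)^(n-1) (x - 1) / ln x dx, and summing
   the geometric series in q = m / (m + 1) under the integral shows that ln P_N tends,
   at rate O(q^N), to L = int_0^1 (x - 1) / ln x * m / (1 + m x) dx.  Splitting the
   integrand of gamma (- m) as 1 / (1 + m x) - (x - 1) / ((1 + m x) ln x) gives
   gamma (- m) = (ln (m + 1) - L) / m. *)

Lemma exp_le a b : a <= b -> exp a <= exp b.
Proof. intros [H | ->]; [apply Rlt_le, exp_increasing, H | apply Rle_refl]. Qed.

Lemma ln_neg x : 0 < x < 1 -> ln x < 0.
Proof. intros Hx; rewrite <- ln_1; apply ln_increasing; lra. Qed.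

Lemma continuous_of_continuity_2d_pt (f : R -> R -> R) t x :
  continuity_2d_pt f t x -> continuous (f t) x.
Proof.
  intros Hf; apply continuity_pt_filterlim, continuity_pt_locally; intros eps.
  destruct (Hf eps) as [d Hd]; exists d; intros y Hy.
  apply Hd; [rewrite Rminus_eq_0, Rabs_R0; apply cond_pos | exact Hy].
Qed.

Lemma continuous_at_0_of_right (f : R -> R) :
  (forall y, y <= 0 -> f y = 0) ->
  (forall eps : posreal, exists d : posreal, forall y, 0 < y < d -> Rabs (f y) < eps) ->
  continuous f 0.
Proof.
  intros Hneg Hpos; apply continuity_pt_filterlim, continuity_pt_locally; intros eps.
  destruct (Hpos eps) as [d Hd]; exists d; intros y Hy.
  change (Rabs (y - 0) < d) in Hy; rewrite Rminus_0_r in Hy.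
  rewrite (Hneg 0), Rminus_0_r by lra.
  destruct (Rle_or_lt y 0) as [Hy0 | Hy0].
  - rewrite Hneg, Rabs_R0 by exact Hy0; apply cond_pos.
  - apply Hd; split; [exact Hy0 |]; rewrite Rabs_right in Hy; lra.
Qed.

Lemma is_derive_mul_id_0 (g : R -> R) : continuous g 0 -> is_derive (fun x => x * g x) 0 (g 0).
Proof.
  intros Hg; apply is_derive_Reals; intros eps Heps.
  apply continuity_pt_filterlim in Hg; rewrite continuity_pt_locally in Hg.
  destruct (Hg (mkposreal eps Heps)) as [d Hd]; exists d; intros h Hh0 Hh.
  replace (((0 + h) * g (0 + h) - 0 * g 0) / h) with (g h) by (rewrite Rplus_0_l; field; exact Hh0).
  apply Hd; change (Rabs (h - 0) < d); rewrite Rminus_0_r; exact Hh.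
Qed.

Fixpoint sum_upto (f : nat -> R) (N : nat) : R :=
  match N with
  | O => 0
  | S N' => sum_upto f N' + f N'
  end.

Lemma sum_upto_ext f g N :
  (forall k, (k < N)%nat -> f k = g k) -> sum_upto f N = sum_upto g N.
Proof. induction N as [| N IH]; simpl; intros H; [reflexivity |]; rewrite IH, H; auto. Qed.

Lemma sum_upto_scal c f N : sum_upto (fun k => c * f k) N = c * sum_upto f N.
Proof. induction N as [| N IH]; simpl; [ring | rewrite IH; ring]. Qed.

Lemma sum_upto_minus f g N : sum_upto (fun k => f k - g k) N = sum_upto f N - sum_upto g N.
Proof. induction N as [| N IH]; simpl; [ring | rewrite IH; ring]. Qed.

Lemma sum_upto_sum_f_R0 f n : sum_upto f (S n) = sum_f_R0 f n.
Proof. induction n as [| n IH]; simpl in *; [ring | rewrite <- IH; reflexivity]. Qed.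

Lemma sum_upto_geom r N : sum_upto (pow r) N * (1 - r) = 1 - r ^ N.
Proof. induction N as [| N IH]; simpl; [ring | rewrite Rmult_plus_distr_r, IH; ring]. Qed.

Lemma sum_upto_alt_binomial n y :
  sum_upto (fun k => (-1) ^ (k + 1) * Binomial.C n k * y ^ k) (S n) = - (1 - y) ^ n.
Proof.
  replace (1 - y) with (- y + 1) by ring.
  rewrite binomial, <- sum_upto_sum_f_R0.
  match goal with |- _ = - sum_upto ?g _ =>
    replace (- sum_upto g (S n)) with (-1 * sum_upto g (S n)) by ring end.
  rewrite <- sum_upto_scal.
  apply sum_upto_ext; intros k _.
  rewrite pow1, pow_add; replace (- y) with (-1 * y) by ring; rewrite Rpow_mult_distr; ring.
Qed.

Lemma prod_upto_pos f N : (forall k, 0 < f k) -> 0 < prod_upto f N.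
Proof. intros H; induction N as [| N IH]; simpl; [lra | apply Rmult_lt_0_compat; auto]. Qed.

Lemma ln_prod_upto f N :
  (forall k, 0 < f k) -> ln (prod_upto f N) = sum_upto (fun k => ln (f k)) N.
Proof.
  intros H; induction N as [| N IH]; simpl; [apply ln_1 |].
  rewrite ln_mult, IH by (auto using prod_upto_pos); reflexivity.
Qed.

Lemma is_RInt_sum_upto (g : nat -> R -> R) (I : nat -> R) a b N :
  (forall k, (k < N)%nat -> is_RInt (g k) a b (I k)) ->
  is_RInt (fun x => sum_upto (fun k => g k x) N) a b (sum_upto I N).
Proof.
  induction N as [| N IH]; simpl; intros H.
  - pose proof (is_RInt_const (V := R_NormedModule) a b 0) as H0.
    unfold scal in H0; simpl in H0; unfold mult in H0; simpl in H0; rewrite Rmult_0_r in H0.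
    exact H0.
  - apply (is_RInt_plus (V := R_NormedModule)); auto.
Qed.

Lemma is_lim_seq_is_RInt_unif (f : nat -> R -> R) (g : R -> R) (I : nat -> R) (J : R)
    (e : nat -> R) a b : a <= b ->
  (forall N, is_RInt (f N) a b (I N)) -> is_RInt g a b J ->
  (forall N x, a <= x <= b -> Rabs (f N x - g x) <= e N) -> is_lim_seq e 0 ->
  is_lim_seq I J.
Proof.
  intros Hab Hf Hg Hfg He.
  assert (Hbound : forall N, Rabs (I N - J) <= (b - a) * e N).
  { intros N; apply (norm_RInt_le_const (V := R_NormedModule) (fun x => f N x - g x) a b);
      [exact Hab | exact (Hfg N) | apply (is_RInt_minus (V := R_NormedModule)); auto]. }
  assert (Hlim : forall s, is_lim_seq (fun N => J + s * ((b - a) * e N)) J).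
  { intros s; replace (Finite J) with (Finite (J + s * ((b - a) * 0))) by (f_equal; ring).
    apply is_lim_seq_plus'; [apply is_lim_seq_const |].
    apply is_lim_seq_mult'; [apply is_lim_seq_const |].
    apply is_lim_seq_mult'; [apply is_lim_seq_const | exact He]. }
  apply is_lim_seq_le_le with (fun N => J + -1 * ((b - a) * e N)) (fun N => J + 1 * ((b - a) * e N));
    [| apply Hlim | apply Hlim].
  intros N; specialize (Hbound N); apply Rabs_le_between in Hbound; lra.
Qed.

Lemma geom_partial_sum_err q y N : 0 <= q < 1 -> 0 <= y <= 1 ->
  Rabs (sum_upto (fun i => q ^ S i * y ^ i) N - q / (1 - q * y)) <= q ^ N / (1 - q).
Proof.
  intros Hq Hy; set (r := q * y).
  assert (Hr : 0 <= r <= q).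
  { unfold r; split; [apply Rmult_le_pos; lra |].
    rewrite <- (Rmult_1_r q) at 2; apply Rmult_le_compat_l; lra. }
  rewrite (sum_upto_ext _ (fun i => q * r ^ i)) by (intros i _; unfold r; rewrite Rpow_mult_distr; simpl; ring).
  assert (Hgeom : sum_upto (pow r) N = (1 - r ^ N) / (1 - r))
    by (rewrite <- sum_upto_geom; field; lra).
  rewrite sum_upto_scal, Hgeom.
  replace (q * ((1 - r ^ N) / (1 - r)) - q / (1 - r)) with (- (q * r ^ N / (1 - r))) by (field; lra).
  assert (HrN : 0 <= r ^ N <= q ^ N) by (split; [apply pow_le | apply pow_incr]; lra).
  assert (HqrN : 0 <= q * r ^ N <= q ^ N).
  { split; [apply Rmult_le_pos; lra |].
    rewrite <- (Rmult_1_l (q ^ N)); apply Rmult_le_compat; lra. }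
  rewrite Rabs_Ropp, Rabs_right by (apply Rle_ge, Rdiv_le_0_compat; lra).
  unfold Rdiv; apply Rmult_le_compat; [lra | apply Rlt_le, Rinv_0_lt_compat; lra | lra |].
  apply Rinv_le_contravar; lra.
Qed.

(** * The integral [int_0^1 (x^t - 1) / ln x dx = ln (1 + t)] *)

Definition exprel (z : R) : R := if Req_EM_T z 0 then 1 else (exp z - 1) / z.

Lemma exprel_0 : exprel 0 = 1.
Proof. unfold exprel; destruct (Req_EM_T 0 0); [reflexivity | contradiction]. Qed.

Lemma exprel_neq0 z : z <> 0 -> exprel z = (exp z - 1) / z.
Proof. intros Hz; unfold exprel; destruct (Req_EM_T z 0); [contradiction | reflexivity]. Qed.

Lemma exprel_nonpos_bounds z : z <= 0 -> 0 <= exprel z <= 1.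
Proof.
  intros Hz; destruct (Req_dec z 0) as [-> | Hz0]; [rewrite exprel_0; lra |].
  rewrite exprel_neq0 by exact Hz0.
  pose proof (exp_ineq1_le z).
  assert (exp z < 1) by (rewrite <- exp_0; apply exp_increasing; lra).
  replace ((exp z - 1) / z) with ((1 - exp z) / - z) by (field; exact Hz0).
  split; [apply Rdiv_le_0_compat; lra |].
  apply Rmult_le_reg_r with (- z); [lra |].
  unfold Rdiv; rewrite Rmult_assoc, Rinv_l by lra; lra.
Qed.

Lemma continuous_exprel z : continuous exprel z.
Proof.
  destruct (Req_dec z 0) as [-> | Hz].
  - apply continuity_pt_filterlim; intros eps Heps.
    destruct (derivable_pt_lim_exp 0 eps Heps) as [d Hd].
    exists d; split; [apply cond_pos |]; intros y [[_ Hy0] Hy]; simpl in *.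
    unfold R_dist in *; rewrite Rminus_0_r in Hy.
    rewrite exprel_0, exprel_neq0 by auto.
    specialize (Hd y (not_eq_sym Hy0) Hy); rewrite Rplus_0_l, exp_0 in Hd; exact Hd.
  - apply continuous_ext_loc with (fun y => (exp y - 1) / y).
    + destruct (Rlt_or_le 0 z) as [Hz0 | Hz0].
      * apply (filter_imp (fun y => 0 < y)); [| exact (open_gt 0 z Hz0)].
        intros y Hy; symmetry; apply exprel_neq0; lra.
      * apply (filter_imp (fun y => y < 0)); [| apply (open_lt 0 z); lra].
        intros y Hy; symmetry; apply exprel_neq0; lra.
    + apply (ex_derive_continuous (K := R_AbsRing) (V := R_NormedModule)); auto_derive; exact Hz.
Qed.

Definition rpow (x t : R) : R := if Rle_dec x 0 then 0 else Rpower x t.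

Lemma rpow_nonpos x t : x <= 0 -> rpow x t = 0.
Proof. intros Hx; unfold rpow; destruct (Rle_dec x 0); [reflexivity | lra]. Qed.

Lemma rpow_pos x t : 0 < x -> rpow x t = exp (t * ln x).
Proof. intros Hx; unfold rpow; destruct (Rle_dec x 0); [lra | reflexivity]. Qed.

Lemma continuity_2d_pt_rpow_pos t x : 0 < x -> continuity_2d_pt (fun t x => rpow x t) t x.
Proof.
  intros Hx.
  apply continuity_2d_pt_ext_loc with (fun t x => exp (t * ln x)).
  - exists (mkposreal x Hx); intros u v _ Hv; simpl in Hv.
    symmetry; apply rpow_pos; apply Rabs_def2 in Hv; lra.
  - apply continuity_1d_2d_pt_comp; [apply derivable_continuous_pt, derivable_pt_exp |].
    apply continuity_2d_pt_mult; [apply continuity_2d_pt_id1 |].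
    apply continuity_1d_2d_pt_comp; [| apply continuity_2d_pt_id2].
    apply continuity_pt_filterlim.
    apply (ex_derive_continuous (K := R_AbsRing) (V := R_NormedModule)); auto_derive; exact Hx.
Qed.

(* Near [(t, 0)] with [0 < t]: [0 <= x ^ u <= x ^ (t / 2)] for [u > t / 2] and [x < 1]. *)
Lemma continuity_2d_pt_rpow_0 t : 0 < t -> continuity_2d_pt (fun t x => rpow x t) t 0.
Proof.
  intros Ht eps.
  assert (Hd : 0 < Rmin (t / 2) (Rmin 1 (exp (2 * ln eps / t))))
    by (repeat apply Rmin_pos; [lra | lra | apply exp_pos]).
  exists (mkposreal _ Hd); intros u x Hu Hx; simpl in Hu, Hx.
  rewrite (rpow_nonpos 0 t), Rminus_0_r by lra; rewrite Rminus_0_r in Hx.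
  destruct (Rle_or_lt x 0) as [Hx0 | Hx0].
  { rewrite rpow_nonpos, Rabs_R0 by exact Hx0; apply cond_pos. }
  rewrite Rabs_right in Hx by lra.
  apply Rabs_def2 in Hu.
  pose proof (Rmin_l (t / 2) (Rmin 1 (exp (2 * ln eps / t)))).
  pose proof (Rmin_l 1 (exp (2 * ln eps / t))).
  pose proof (Rmin_r 1 (exp (2 * ln eps / t))).
  pose proof (Rmin_r (t / 2) (Rmin 1 (exp (2 * ln eps / t)))).
  assert (Hln : ln x < 2 * ln eps / t)
    by (rewrite <- (ln_exp (2 * ln eps / t)); apply ln_increasing; lra).
  assert (Hln0 : ln x < 0) by (rewrite <- ln_1; apply ln_increasing; lra).
  rewrite rpow_pos, Rabs_right by (lra || apply Rle_ge, Rlt_le, exp_pos).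
  rewrite <- (exp_ln eps) by apply cond_pos.
  apply exp_increasing.
  apply Rle_lt_trans with (t / 2 * ln x); [nra |].
  apply Rmult_lt_reg_l with (2 / t); [apply Rdiv_lt_0_compat; lra |].
  replace (2 / t * (t / 2 * ln x)) with (ln x) by (field; lra).
  replace (2 / t * ln eps) with (2 * ln eps / t) by (field; lra); exact Hln.
Qed.

Lemma continuity_2d_pt_rpow t x : 0 < t -> 0 <= x -> continuity_2d_pt (fun t x => rpow x t) t x.
Proof.
  intros Ht [Hx | <-]; [apply continuity_2d_pt_rpow_pos, Hx | apply continuity_2d_pt_rpow_0, Ht].
Qed.

Lemma RInt_rpow t : 0 < t -> RInt (fun x => rpow x t) 0 1 = / (t + 1).
Proof.
  intros Ht.
  assert (Hcont : forall x, 0 <= x -> continuous (fun x => rpow x t) x)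
    by (intros x Hx; apply (continuous_of_continuity_2d_pt (fun t x => rpow x t)),
         continuity_2d_pt_rpow; assumption).
  set (G := fun x => x * (rpow x t / (t + 1))).
  assert (HG : is_RInt (fun x => rpow x t) 0 1 (minus (G 1) (G 0))).
  { apply (is_RInt_derive (V := R_CompleteNormedModule)); intros x Hx;
      rewrite Rmin_left, Rmax_right in Hx by lra; [| apply Hcont; lra].
    destruct (Rle_lt_or_eq _ _ (proj1 Hx)) as [Hx0 | <-].
    - apply is_derive_ext_loc with (fun y => y * (exp (t * ln y) / (t + 1))).
      + apply (filter_imp (fun y => 0 < y)); [| exact (open_gt 0 x Hx0)].
        intros y Hy; unfold G; rewrite rpow_pos by exact Hy; reflexivity.
      + rewrite rpow_pos by exact Hx0; auto_derive; [lra |]; field; lra.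
    - replace (rpow 0 t) with (rpow 0 t / (t + 1)) by (rewrite rpow_nonpos by lra; unfold Rdiv; ring).
      apply (is_derive_mul_id_0 (fun x => rpow x t / (t + 1))).
      apply (continuous_mult (fun x => rpow x t) (fun _ => / (t + 1)));
        [apply Hcont; lra | apply continuous_const]. }
  rewrite (is_RInt_unique _ _ _ _ HG); unfold G, minus, plus, opp; simpl.
  rewrite rpow_pos, ln_1, Rmult_0_r, exp_0 by lra; field; lra.
Qed.

(* [(x ^ t - 1) / ln x] on [(0, 1)], extended continuously by [t] at [x = 1] and by [0]
   for [x <= 0]. *)
Definition frullani (t x : R) : R := if Rle_dec x 0 then 0 else t * exprel (t * ln x).

Lemma frullani_nonpos t x : x <= 0 -> frullani t x = 0.
Proof. intros Hx; unfold frullani; destruct (Rle_dec x 0); [reflexivity | lra]. Qed.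

Lemma frullani_pos t x : 0 < x -> frullani t x = t * exprel (t * ln x).
Proof. intros Hx; unfold frullani; destruct (Rle_dec x 0); [lra | reflexivity]. Qed.

Lemma frullani_eq t x : 0 < x -> ln x <> 0 -> frullani t x = (exp (t * ln x) - 1) / ln x.
Proof.
  intros Hx Hl; rewrite frullani_pos by exact Hx.
  destruct (Req_dec t 0) as [-> | Ht].
  - rewrite !Rmult_0_l, exp_0; unfold Rdiv; ring.
  - rewrite exprel_neq0 by (apply Rmult_integral_contrapositive; auto); field; auto.
Qed.

Lemma frullani_1 t : frullani t 1 = t.
Proof. rewrite frullani_pos, ln_1, Rmult_0_r, exprel_0 by lra; apply Rmult_1_r. Qed.

Lemma frullani_nat k x : 0 < x < 1 -> frullani (INR k) x = (x ^ k - 1) / ln x.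
Proof.
  intros Hx; pose proof (ln_neg x Hx).
  rewrite frullani_eq, <- (Rpower_pow k x) by lra; reflexivity.
Qed.

Lemma frullani_bounds t x : 0 <= t -> 0 <= x <= 1 -> 0 <= frullani t x <= t.
Proof.
  intros Ht Hx; destruct (Rle_or_lt x 0) as [Hx0 | Hx0]; [rewrite frullani_nonpos; lra |].
  rewrite frullani_pos by exact Hx0.
  assert (ln x <= 0) by (rewrite <- ln_1; apply ln_le; lra).
  destruct (exprel_nonpos_bounds (t * ln x)); [nra | nra].
Qed.

Lemma frullani_le_inv_ln t x : 0 <= t -> 0 < x < 1 -> frullani t x <= / - ln x.
Proof.
  intros Ht Hx; pose proof (ln_neg x Hx).
  rewrite frullani_eq by lra.
  assert (exp (t * ln x) <= 1) by (rewrite <- exp_0; apply exp_le; nra).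
  pose proof (exp_pos (t * ln x)).
  replace ((exp (t * ln x) - 1) / ln x) with ((1 - exp (t * ln x)) * / - ln x) by (field; lra).
  assert (0 < / - ln x) by (apply Rinv_0_lt_compat; lra); nra.
Qed.

Lemma continuous_frullani t x : 0 <= t -> 0 <= x -> continuous (frullani t) x.
Proof.
  intros Ht Hx; destruct (Rle_lt_or_eq _ _ Hx) as [Hx0 | <-].
  - apply continuous_ext_loc with (fun y => t * exprel (t * ln y)).
    + apply (filter_imp (fun y => 0 < y)); [| exact (open_gt 0 x Hx0)].
      intros y Hy; symmetry; apply frullani_pos, Hy.
    + apply (continuous_comp (fun y => t * ln y) (fun z => t * exprel z)).
      * apply (ex_derive_continuous (K := R_AbsRing) (V := R_NormedModule)); auto_derive; lra.
      * apply (continuous_mult (fun _ => t) exprel); [apply continuous_const | apply continuous_exprel].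
  - apply continuous_at_0_of_right; [intros; apply frullani_nonpos; assumption |].
    intros eps; assert (Hd : 0 < Rmin 1 (exp (- / eps)))
      by (apply Rmin_pos; [lra | apply exp_pos]).
    exists (mkposreal _ Hd); intros y [Hy0 Hy]; simpl in Hy.
    pose proof (Rmin_l 1 (exp (- / eps))); pose proof (Rmin_r 1 (exp (- / eps))).
    assert (Hln : ln y < - / eps)
      by (rewrite <- (ln_exp (- / eps)); apply ln_increasing; lra).
    pose proof (cond_pos eps); pose proof (ln_neg y ltac:(lra)).
    destruct (frullani_bounds t y) as [Hk _]; [lra | lra |].
    rewrite Rabs_right by lra.
    eapply Rle_lt_trans; [apply frullani_le_inv_ln; lra |].
    replace (pos eps) with (/ / eps) by (field; lra).
    apply Rinv_lt_contravar; [| lra].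
    assert (0 < / eps) by (apply Rinv_0_lt_compat; lra); nra.
Qed.

Lemma ex_RInt_frullani t : 0 <= t -> ex_RInt (frullani t) 0 1.
Proof.
  intros Ht; apply (ex_RInt_continuous (V := R_CompleteNormedModule)); intros x Hx.
  rewrite Rmin_left, Rmax_right in Hx by lra; apply continuous_frullani; lra.
Qed.

Lemma is_derive_frullani t x : is_derive (fun s => frullani s x) t (rpow x t).
Proof.
  destruct (Rle_or_lt x 0) as [Hx | Hx].
  - rewrite rpow_nonpos by exact Hx.
    apply (is_derive_ext (fun _ => 0)); [intros s; symmetry; apply frullani_nonpos, Hx |].
    apply (is_derive_const (K := R_AbsRing) (V := R_NormedModule)).
  - rewrite rpow_pos by exact Hx.
    destruct (Req_dec x 1) as [-> | Hx1].
    + rewrite ln_1, Rmult_0_r, exp_0.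
      apply (is_derive_ext (fun s => s)); [intros s; symmetry; apply frullani_1 |].
      apply (is_derive_id (K := R_AbsRing)).
    + assert (Hl : ln x <> 0) by (intros H; apply Hx1, ln_inv; [lra | lra | rewrite ln_1; exact H]).
      apply (is_derive_ext (fun s => (exp (s * ln x) - 1) / ln x));
        [intros s; symmetry; apply frullani_eq; assumption |].
      auto_derive; [exact I | field; exact Hl].
Qed.

Lemma is_derive_RInt_frullani t : 0 < t -> is_derive (fun s => RInt (frullani s) 0 1) t (/ (t + 1)).
Proof.
  intros Ht; rewrite <- RInt_rpow by exact Ht.
  replace (RInt (fun x => rpow x t) 0 1)
    with (RInt (fun x => Derive (fun s => frullani s x) t) 0 1)
    by (apply RInt_ext; intros x _; apply is_derive_unique, is_derive_frullani).
  apply (is_derive_RInt_param frullani).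
  - apply filter_forall; intros s x _; eexists; apply is_derive_frullani.
  - intros x Hx; rewrite Rmin_left, Rmax_right in Hx by lra.
    apply continuity_2d_pt_ext with (fun s x => rpow x s);
      [intros s y; symmetry; apply is_derive_unique, is_derive_frullani |].
    apply continuity_2d_pt_rpow; lra.
  - apply (filter_imp (fun s => 0 < s)); [| exact (open_gt 0 t Ht)].
    intros s Hs; apply ex_RInt_frullani; lra.
Qed.

Lemma abs_RInt_frullani_le a : 0 <= a -> Rabs (RInt (frullani a) 0 1) <= a.
Proof.
  intros Ha; replace a with ((1 - 0) * a) at 2 by ring.
  apply abs_RInt_le_const; [lra | apply ex_RInt_frullani, Ha |].
  intros x Hx; destruct (frullani_bounds a x) as [H0 H1]; [lra | lra |].
  rewrite Rabs_right; lra.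
Qed.

(* [RInt (frullani s) 0 1 - ln (s + 1)] has derivative [0] on [(0, oo)] and is [O(s)] at [0+]. *)
Lemma RInt_frullani T : 0 <= T -> RInt (frullani T) 0 1 = ln (T + 1).
Proof.
  intros HT; set (H := fun s => RInt (frullani s) 0 1 - ln (s + 1)).
  apply Rminus_diag_uniq; change (H T = 0); apply Rabs_eq_0, Rle_antisym; [| apply Rabs_pos].
  apply Rle_plus_epsilon; intros eps Heps; rewrite Rplus_0_l.
  assert (Hsmall : forall a, 0 <= a -> Rabs (H a) <= 2 * a).
  { intros a Ha; unfold H; pose proof (abs_RInt_frullani_le a Ha).
    assert (0 <= ln (a + 1) <= a).
    { split; [rewrite <- ln_1; apply ln_le; lra |].
      rewrite <- (ln_exp a) at 2; apply ln_le; [lra |]; pose proof (exp_ineq1_le a); lra. }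
    eapply Rle_trans; [apply Rabs_triang |]; rewrite Rabs_Ropp, (Rabs_right (ln _)); lra. }
  destruct (Rle_or_lt T (eps / 2)) as [HT2 | HT2]; [pose proof (Hsmall T HT); lra |].
  replace (H T) with (H (eps / 2)); [pose proof (Hsmall (eps / 2)); lra |].
  apply (eq_is_derive (V := R_NormedModule)); [| exact HT2]; intros s Hs.
  replace (@zero R_NormedModule) with (minus (/ (s + 1)) (/ (s + 1)))
    by (rewrite minus_eq_zero; reflexivity).
  apply (is_derive_minus (fun s => RInt (frullani s) 0 1) (fun s => ln (s + 1))).
  - apply is_derive_RInt_frullani; lra.
  - auto_derive; [lra | field; lra].
Qed.

Lemma is_RInt_ln_inner_factor n :
  is_RInt (fun x => (1 - x) ^ n * frullani 1 x) 0 1 (ln (inner_factor (S n))).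
Proof.
  unfold inner_factor; rewrite ln_prod_upto by (intros; apply exp_pos).
  rewrite (sum_upto_ext _ (fun k => (-1) ^ (k + 1) * Binomial.C (S n) k * RInt (frullani (INR k)) 0 1))
    by (intros k _; rewrite ln_Rpower, RInt_frullani by apply pos_INR; reflexivity).
  apply (is_RInt_ext (fun x => sum_upto (fun k => (-1) ^ (k + 1) * Binomial.C (S n) k * frullani (INR k) x) (S (S n)))).
  - intros x Hx; rewrite Rmin_left, Rmax_right in Hx by lra; pose proof (ln_neg x Hx).
    rewrite (sum_upto_ext _ (fun k => / ln x * ((-1) ^ (k + 1) * Binomial.C (S n) k * x ^ k
                                               - (-1) ^ (k + 1) * Binomial.C (S n) k * 1 ^ k)))
      by (intros k _; rewrite frullani_nat, pow1 by lra; field; lra).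
    rewrite sum_upto_scal, sum_upto_minus, !sum_upto_alt_binomial.
    replace (frullani 1 x) with (frullani (INR 1) x) by reflexivity.
    rewrite frullani_nat by lra.
    simpl; field; lra.
  - apply is_RInt_sum_upto; intros k _.
    apply (is_RInt_scal (V := R_NormedModule)), (RInt_correct (V := R_CompleteNormedModule)).
    apply ex_RInt_frullani, pos_INR.
Qed.

Lemma P_partial_pos m N : 0 < P_partial m N.
Proof. apply prod_upto_pos; intros; apply exp_pos. Qed.

Lemma is_RInt_ln_P_partial m N :
  is_RInt (fun x => sum_upto (fun i => (INR m / (INR m + 1)) ^ S i * ((1 - x) ^ i * frullani 1 x)) N)
    0 1 (ln (P_partial m N)).
Proof.
  unfold P_partial; rewrite ln_prod_upto by (intros; apply exp_pos).
  apply is_RInt_sum_upto; intros i _; rewrite ln_Rpower.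
  apply (is_RInt_scal (V := R_NormedModule)).
  apply is_RInt_ln_inner_factor.
Qed.

Lemma ex_RInt_frullani_weight M : 0 <= M -> ex_RInt (fun x => frullani 1 x * (M / (1 + M * x))) 0 1.
Proof.
  intros HM; apply (ex_RInt_continuous (V := R_CompleteNormedModule)); intros x Hx.
  rewrite Rmin_left, Rmax_right in Hx by lra.
  apply (continuous_mult (frullani 1) (fun x => M / (1 + M * x))); [apply continuous_frullani; lra |].
  apply (ex_derive_continuous (K := R_AbsRing) (V := R_NormedModule)); auto_derive; nra.
Qed.

Lemma is_lim_seq_ln_P_partial m :
  is_lim_seq (fun N => ln (P_partial m N))
    (RInt (fun x => frullani 1 x * (INR m / (1 + INR m * x))) 0 1).
Proof.
  set (M := INR m); set (q := M / (M + 1)).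
  assert (HM : 0 <= M) by apply pos_INR.
  assert (Hq : 0 <= q < 1)
    by (unfold q; split; [apply Rdiv_le_0_compat; lra | apply Rmult_lt_reg_r with (M + 1); [lra |]];
        unfold Rdiv; rewrite Rmult_assoc, Rinv_l; lra).
  apply (is_lim_seq_is_RInt_unif
           (fun N x => sum_upto (fun i => q ^ S i * ((1 - x) ^ i * frullani 1 x)) N)
           (fun x => frullani 1 x * (M / (1 + M * x))) _ _ (fun N => q ^ N / (1 - q)) 0 1);
    [lra | apply is_RInt_ln_P_partial |
    apply (RInt_correct (V := R_CompleteNormedModule)), ex_RInt_frullani_weight, HM | |].
  - intros N x Hx; fold M q.
    rewrite (sum_upto_ext _ (fun i => frullani 1 x * (q ^ S i * (1 - x) ^ i))) by (intros; ring).
    rewrite sum_upto_scal.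
    replace (M / (1 + M * x)) with (q / (1 - q * (1 - x))) by (unfold q; field; nra).
    rewrite <- Rmult_minus_distr_l, Rabs_mult.
    destruct (frullani_bounds 1 x) as [H0 H1]; [lra | lra |].
    rewrite Rabs_right by lra.
    rewrite <- (Rmult_1_l (q ^ N / (1 - q))).
    apply Rmult_le_compat; [lra | apply Rabs_pos | lra | apply geom_partial_sum_err; lra].
  - replace (Finite 0) with (Finite (0 / (1 - q))) by (f_equal; unfold Rdiv; ring).
    apply is_lim_seq_div'; [apply is_lim_seq_geom; rewrite Rabs_right | apply is_lim_seq_const |]; lra.
Qed.

Lemma is_RInt_inv_affine M : 0 < M -> is_RInt (fun x => / (1 + M * x)) 0 1 (ln (M + 1) / M).
Proof.
  intros HM; replace (ln (M + 1) / M) with (minus (ln (1 + M * 1) / M) (ln (1 + M * 0) / M))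
    by (unfold minus, plus, opp; simpl; rewrite Rmult_0_r, Rplus_0_r, ln_1, Rmult_1_r, (Rplus_comm 1 M);
        unfold Rdiv; ring).
  apply (is_RInt_derive (V := R_CompleteNormedModule) (fun x => ln (1 + M * x) / M));
    intros x Hx; rewrite Rmin_left, Rmax_right in Hx by lra.
  - auto_derive; [nra | field; nra].
  - apply (ex_derive_continuous (K := R_AbsRing) (V := R_NormedModule)); auto_derive; nra.
Qed.

Lemma gamma_fun_neg M : 0 < M ->
  gamma_fun (- M) = (ln (M + 1) - RInt (fun x => frullani 1 x * (M / (1 + M * x))) 0 1) / M.
Proof.
  intros HM; unfold gamma_fun; apply is_RInt_unique.
  apply (is_RInt_ext (fun x => / (1 + M * x) - / M * (frullani 1 x * (M / (1 + M * x))))).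
  - intros x Hx; rewrite Rmin_left, Rmax_right in Hx by lra; pose proof (ln_neg x Hx).
    replace (frullani 1 x) with (frullani (INR 1) x) by reflexivity.
    rewrite frullani_nat by lra; simpl; field; repeat split; nra.
  - replace ((ln (M + 1) - _) / M) with (minus (ln (M + 1) / M)
       (scal (/ M) (RInt (fun x => frullani 1 x * (M / (1 + M * x))) 0 1)))
      by (unfold minus, plus, opp, scal; simpl; unfold mult; simpl; field; lra).
    apply (is_RInt_minus (V := R_NormedModule)); [apply is_RInt_inv_affine, HM |].
    apply (is_RInt_scal (V := R_NormedModule)), (RInt_correct (V := R_CompleteNormedModule)).
    apply ex_RInt_frullani_weight; lra.
Qed.

Theorem corollary10 (m : nat) (hm : (1 <= m)%nat) :
  exists P : R,
    0 < P /\
    is_lim_seq (P_partial m) P /\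
    gamma_fun (- INR m) = / INR m * ln ((INR m + 1) / P).
Proof.
  assert (HM : 0 < INR m) by (apply lt_0_INR; lia).
  set (L := RInt (fun x => frullani 1 x * (INR m / (1 + INR m * x))) 0 1).
  exists (exp L); split; [apply exp_pos |]; split.
  - apply is_lim_seq_ext with (fun N => exp (ln (P_partial m N)));
      [intros N; apply exp_ln, P_partial_pos |].
    apply is_lim_seq_continuous; [apply derivable_continuous_pt, derivable_pt_exp |].
    apply is_lim_seq_ln_P_partial.
  - rewrite gamma_fun_neg, ln_div, ln_exp by (lra || apply exp_pos).
    fold L; field; lra.
Qed.
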